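(* Let ${\tt G}$ be a digraph, $R$ a commutative unital ring and $A$ a unital associative $R$-algebra. Then the cochain complex $(C^*_\mu({\tt G};A,A),d^* )$ does not depend, up to isomorphism of cochain complexes, on the choice of the total order on $V({\tt G})$ used to define it.
   Context: A digraph ${\tt G}=(V,E)$ has finite $V$ and $E\subseteq(V\times V)\setminus\{(v,v)\}$. A multipath is a spanning subgraph (all vertices, subset of edges) each of whose components (of the underlying undirected graph) is an isolated vertex or a simple directed path. $P({\tt G})$ is the set of multipaths ordered by inclusion of edge sets; ${\tt H}\prec{\tt H}\cup e$ denotes adding one edge $e$. Given a total order on $V({\tt G})$, order the components $c_0<\dots<c_k$ of a multipath by minimal vertex and let $s,t$ be the indices of the components containing the source and target of $e$. $\mathcal F_{A,A}({\tt H})=A^{\otimes_R(k+1)}$; for ${\tt H}\prec{\tt H}\cup e$ the merged component is placed at position $\min(s,t)$ and the map replaces $a_s,a_t$ by $a_sa_t$ there. Sign $\sigma({\tt H},{\tt H}\cup e)=t+1$ if $t>s$, $=s$ if $s>t$ (mod 2). $C^n_\mu({\tt G};A,A)=\bigoplus_{{\tt H}\in P({\tt G}),\#E({\tt H})=n}\mathcal F_{A,A}({\tt H})$, $d=\sum_{{\tt H}\prec{\tt H}'}(-1)^{\sigma({\tt H},{\tt H}')}\mathcal F_{A,A}({\tt H}\prec{\tt H}')$. *)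

From HB Require Import structures.
From mathcomp Require Import all_boot all_order all_algebra.
From mathcomp Require Import boolp.
Set Implicit Arguments. Unset Strict Implicit. Unset Printing Implicit Defensive.
Import GRing.Theory.
Local Open Scope ring_scope.

(* A digraph G = (V, E): V a finType, E : {set V * V} with no loops    *)
(* (the loop-freeness is a hypothesis of the theorem).                  *)
(* A spanning subgraph is given by its edge set H : {set V * V}.        *)
Section Graphs.
Variable V : finType.

Definition und (H : {set V * V}) : rel V :=
  [rel x y | ((x, y) \in H) || ((y, x) \in H)].

(* the connected component of v in (the underlying undirected graph of) H
   is  [set x | connect (und H) v x] *)

(* H is a multipath of the digraph with edge set E: H is a subset of E and
   every component of H is an isolated vertex or a simple directed path,
   i.e. its vertices can be listed without repetition as v_0,...,v_m so that
   the edges of H leaving vertices of the component are exactly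
   (v_i, v_{i+1}). *)
Definition multipath (E H : {set V * V}) : Prop :=
  H \subset E /\
  forall v : V, exists s : seq V,
    [/\ uniq s,
        forall x, (x \in s) = connect (und H) v x &
        forall x y, x \in s ->
          ((x, y) \in H) =
          [exists i : 'I_(size s).-1, (nth v s i == x) && (nth v s i.+1 == y)]].

Definition multipathb (E H : {set V * V}) : bool := `[< multipath E H >].

(* number of components (k+1 in the paper) *)
Definition ncomp (H : {set V * V}) : nat :=
  #|[set [set x | connect (und H) v x] | v : V]|.

Definition total_order (le : rel V) : Prop :=
  [/\ reflexive le, antisymmetric le, transitive le & total le].

Definition isroot (le : rel V) (H : {set V * V}) (w : V) : bool :=
  [forall x, connect (und H) w x ==> le w x].

(* index of the component containing v, when the components are ordered
   c_0 < ... < c_k by their minimal vertex: the number of components whose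
   minimal vertex is strictly smaller than that of the component of v. *)
Definition cidx (le : rel V) (H : {set V * V}) (v : V) : nat :=
  #|[set w | [&& isroot le H w, ~~ connect (und H) v w &
                 [forall x, connect (und H) v x ==> le w x]]]|.

End Graphs.

(* A generator is a pair (H, a) with a = [:: a_0; ...; a_k] : seq A,    *)
(* standing for the elementary tensor a_0 (x) ... (x) a_k in the summand *)
(* F_{A,A}(H) = A^{(x)(k+1)}, a_i sitting on the i-th component c_i.     *)
(* A formal sum is a list of (coefficient, generator) pairs, i.e. an     *)
(* element of the free R-module on generators; the tensor product is     *)
(* the quotient of this free module by the R-submodule spanned by the    *)
(* multilinearity relations (relation [equivq] below).                   *)
Section Cochains.
Variables (R : comPzRingType) (A : algType R) (V : finType).

Definition Gen := ({set V * V} * seq A)%type.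
Definition FS := seq (R * Gen).

Definition coef (f : FS) (g : Gen) : R := \sum_(p <- f | p.2 == g) p.1.

Definition scaleFS (c : R) (f : FS) : FS := [seq (c * p.1, p.2) | p <- f].

Definition basic (h : FS) : Prop :=
  (exists (r : R) (H : {set V * V}) (a : seq A) (i : nat) (x y : A),
      (i < size a)%N /\
      h = [:: (r, (H, set_nth 0 a i (x + y)));
              (- r, (H, set_nth 0 a i x));
              (- r, (H, set_nth 0 a i y))])
  \/
  (exists (r c : R) (H : {set V * V}) (a : seq A) (i : nat) (x : A),
      (i < size a)%N /\
      h = [:: (r, (H, set_nth 0 a i (c *: x)));
              (- (r * c), (H, set_nth 0 a i x))]).

(* f and g define the same element of the tensor product: f - g lies in the
   R-span of the basic relations *)
Definition equivq (f g : FS) : Prop :=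
  exists fs : seq FS, (forall h, h \in fs -> basic h) /\
    forall x : Gen, coef f x - coef g x = \sum_(h <- fs) coef h x.

(* f is a formal sum of generators of C^n_mu(G; A, A): multipaths with n
   edges, with one tensor factor per component *)
Definition cdeg (E : {set V * V}) (n : nat) (f : FS) : Prop :=
  forall p, p \in f ->
    [/\ multipath E p.2.1, #|p.2.1| = n & size p.2.2 = ncomp p.2.1].

(* F_{A,A}(H < H u e): replace a_s, a_t by a_s a_t placed at min(s,t)
   (the factor at position max(s,t) is removed) *)
Definition merge (a : seq A) (s t : nat) : seq A :=
  let m := minn s t in let M := maxn s t in
  set_nth 0 (take M a ++ drop M.+1 a) m (nth 0 a s * nth 0 a t).

Definition sigma (s t : nat) : nat := if (s < t)%N then t.+1 else s.

Definition dgen (le : rel V) (E : {set V * V}) (p : R * Gen) : FS :=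
  let: (r, (H, a)) := p in
  [seq (let s := cidx le H e.1 in let t := cidx le H e.2 in
        ((-1) ^+ sigma s t * r, (e |: H, merge a s t)))
  | e <- enum (E :\: H) & multipathb E (e |: H)].

Definition dFS (le : rel V) (E : {set V * V}) (f : FS) : FS :=
  flatten [seq dgen le E p | p <- f].

(* psi = (psi_n)_n is (a family of representative-level lifts of) an
   isomorphism of cochain complexes
   (C^*_mu(G;A,A), d_le1) --> (C^*_mu(G;A,A), d_le2):
   each psi_n is well defined on classes, maps C^n to C^n, is R-linear,
   bijective on classes, and psi commutes with the differentials. *)
Definition complex_iso (E : {set V * V}) (le1 le2 : rel V)
    (psi : nat -> FS -> FS) : Prop :=
  forall n : nat,
  (forall f, cdeg E n f -> cdeg E n (psi n f)) /\
  (forall f g, cdeg E n f -> cdeg E n g -> equivq f g ->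
     equivq (psi n f) (psi n g)) /\
  (forall f g, cdeg E n f -> cdeg E n g ->
     equivq (psi n (f ++ g)) (psi n f ++ psi n g)) /\
  (forall c f, cdeg E n f ->
     equivq (psi n (scaleFS c f)) (scaleFS c (psi n f))) /\
  (forall f g, cdeg E n f -> cdeg E n g -> equivq (psi n f) (psi n g) ->
     equivq f g) /\
  (forall g, cdeg E n g -> exists2 f, cdeg E n f & equivq (psi n f) g) /\
  (forall f, cdeg E n f ->
     equivq (dFS le2 E (psi n f)) (psi n.+1 (dFS le1 E f))).

End Cochains.

From Pilot Require Import Defs.
From HB Require Import structures.
From mathcomp Require Import all_boot all_order all_algebra.
From mathcomp Require Import boolp.
From mathcomp Require Import zify.
Set Implicit Arguments. Unset Strict Implicit. Unset Printing Implicit Defensive.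
Import GRing.Theory.

(* The isomorphism reorders the tensor factors of (H, a) from the le1-order of
   the components of H to their le2-order, and multiplies by the sign of this
   permutation.  That sign is the product of the signs of le1 and of le2
   relative to a fixed reference order, so the maps for (le1, le2) and
   (le2, le1) are inverse to each other.  Compatibility with d reduces to two
   facts about adding an edge (u, w) between distinct components with
   positions s, t in one order and s', t' in the other: merging tensor
   factors commutes with reordering, and the parity of the number of pairs of
   components ordered differently by the two orders changes by
   sigma(s, t) + sigma(s', t').  For the latter, pairs of untouched components
   keep their relative order, and an untouched component at positions p, p'
   contributes [p < max(s, t)] + [p' < max(s', t')] modulo 2; summing over
   them gives max(s, t) - 1 + max(s', t') - 1. *)

(** * Component roots and indices *)

Section OrderRank.
Variables (V : finType) (le : rel V).
Hypothesis le_total : total_order le.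

Definition order_rank (x : V) : nat := #|[set y | le y x]|.

Lemma le_order_rank x y : le x y = (order_rank x <= order_rank y)%N.
Proof.
case: le_total => le_refl _ le_trans le_tot.
have sub a b : le a b -> [set z | le z a] \subset [set z | le z b].
  by move=> le_ab; apply/subsetP => z; rewrite !inE => /le_trans; apply.
case le_xy: (le x y); first by rewrite subset_leq_card // sub.
have le_yx : le y x by move: (le_tot x y); rewrite le_xy.
apply/esym/negbTE; rewrite -ltnNge; apply: proper_card.
by rewrite properE sub //=; apply/subsetPn; exists x; rewrite !inE ?le_refl ?le_xy.
Qed.

Lemma order_rank_inj : injective order_rank.
Proof.
move=> x y eq_xy; case: le_total => _ le_anti _ _; apply: le_anti.
by rewrite !le_order_rank eq_xy leqnn.
Qed.

End OrderRank.

Lemma onto_of_inj_bounded (T : finType) (S : {set T}) (pos : T -> nat) :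
  {in S &, injective pos} -> (forall x, x \in S -> pos x < #|S|)%N ->
  forall j, (j < #|S|)%N -> exists2 x, x \in S & pos x = j.
Proof.
move=> pos_inj pos_lt j lt_j.
have uniq_img : uniq [seq pos x | x <- enum S].
  by rewrite map_inj_in_uniq ?enum_uniq // => x y; rewrite !mem_enum; apply: pos_inj.
have sub_img : {subset [seq pos x | x <- enum S] <= iota 0 #|S|}.
  by move=> i /mapP[x]; rewrite mem_enum mem_iota add0n => /pos_lt lt_x ->.
have size_img : (size (iota 0 #|S|) <= size [seq pos x | x <- enum S])%N.
  by rewrite size_map size_iota cardE.
have [_ img_eq] := uniq_min_size uniq_img sub_img size_img.
have : j \in [seq pos x | x <- enum S] by rewrite img_eq mem_iota.
by case/mapP=> x; rewrite mem_enum => S_x ->; exists x.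
Qed.

Lemma sum_pos_below (T : finType) (S : {set T}) (pos : T -> nat) (K : nat) :
  {in S &, injective pos} -> (forall x, x \in S -> pos x < #|S|)%N ->
  (K <= #|S|)%N -> (\sum_(x in S) (pos x < K) = K)%N.
Proof.
move=> pos_inj pos_lt le_K; rewrite -big_mkcondr sum1_card.
rewrite (eq_card (B := [set x in S | pos x < K])) => [|x]; last by rewrite inE.
set B := [set x in S | _].
have uniq_img : uniq [seq pos x | x <- enum B].
  rewrite map_inj_in_uniq ?enum_uniq // => x y; rewrite !mem_enum !inE.
  by case/andP=> S_x _ /andP[S_y _]; apply: pos_inj.
have img_eq : [seq pos x | x <- enum B] =i iota 0 K.
  move=> j; rewrite mem_iota add0n; apply/mapP/idP.
    by case=> x; rewrite mem_enum inE => /andP[_ lt_x] ->.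
  move=> lt_j; have [x S_x pos_x] := onto_of_inj_bounded pos_inj pos_lt (leq_trans lt_j le_K).
  by exists x; rewrite // mem_enum inE S_x pos_x lt_j.
by rewrite cardE -(size_map pos) (perm_size (uniq_perm uniq_img (iota_uniq 0 K) img_eq)) size_iota.
Qed.

Section Components.
Variables (V : finType) (H : {set V * V}).
Local Notation conn := (connect (und H)).

Lemma und_sym : symmetric (und H).
Proof. by move=> x y; rewrite /und /= orbC. Qed.

Lemma conn_sym : connect_sym (und H).
Proof. exact: sym_connect_sym und_sym. Qed.

Variables (key : V -> nat).
Hypothesis key_inj : injective key.

Definition comp_root (v : V) : V := [arg min_(x < v | conn v x) key x].

Definition root_key (v : V) : nat := key (comp_root v).

Lemma conn_comp_root v : conn v (comp_root v).
Proof. by rewrite /comp_root; case: arg_minnP. Qed.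

Lemma root_key_min v x : conn v x -> (root_key v <= key x)%N.
Proof. by rewrite /root_key /comp_root; case: arg_minnP => // r _; apply. Qed.

Lemma comp_root_eq v w : conn v w -> comp_root v = comp_root w.
Proof.
move=> conn_vw; apply: key_inj; apply/eqP; rewrite eqn_leq.
rewrite root_key_min ?(connect_trans conn_vw) ?conn_comp_root //=.
by rewrite root_key_min // -(same_connect conn_sym conn_vw) conn_comp_root.
Qed.

Lemma eq_root_key v w : (root_key v == root_key w) = conn v w.
Proof.
apply/idP/idP => [/eqP/key_inj eq_vw | /comp_root_eq]; last by rewrite /root_key => ->.
by rewrite (same_connect conn_sym (conn_comp_root v)) eq_vw conn_sym conn_comp_root.
Qed.

Lemma comp_rootK v : comp_root (comp_root v) = comp_root v.
Proof. exact/esym/comp_root_eq/conn_comp_root. Qed.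

Definition roots : {set V} := [set w | comp_root w == w].

Lemma in_roots x : (x \in roots) = (root_key x == key x).
Proof. by rewrite inE /root_key (inj_eq key_inj). Qed.

Lemma comp_root_in v : comp_root v \in roots.
Proof. by rewrite inE comp_rootK. Qed.

Lemma ncomp_roots : ncomp H = #|roots|.
Proof.
have comp_of_root v : [set x | conn v x] = [set x | conn (comp_root v) x].
  by apply/setP => x; rewrite !inE (same_connect conn_sym (conn_comp_root v)).
rewrite /ncomp -(card_in_imset (f := fun w => [set x | conn w x])).
  congr #|pred_of_set _|; apply/setP => X; apply/imsetP/imsetP => [[v _ ->]|[w _ ->]].
    by exists (comp_root v); [exact: comp_root_in | exact: comp_of_root].
  by exists w.
move=> w w'; rewrite !inE => /eqP root_w /eqP root_w' eq_comp.
have : w' \in [set x | conn w x] by rewrite eq_comp inE connect0.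
by rewrite inE => /comp_root_eq; rewrite root_w root_w'.
Qed.

Definition roots_below (K : nat) : nat := #|[set w in roots | key w < K]|.

Lemma roots_below_mono K K' : (K <= K')%N -> (roots_below K <= roots_below K')%N.
Proof.
move=> le_K; apply/subset_leq_card/subsetP => w; rewrite !inE => /andP[-> lt_w].
exact: leq_trans lt_w le_K.
Qed.

Lemma roots_below_root_key v K :
  (root_key v < K)%N -> (roots_below (root_key v) < roots_below K)%N.
Proof.
move=> lt_vK; apply: proper_card; rewrite properE; apply/andP; split.
  apply/subsetP => w; rewrite !inE => /andP[-> lt_w]; exact: ltn_trans lt_w lt_vK.
by apply/subsetPn; exists (comp_root v); rewrite !inE comp_rootK ?eqxx ?ltnn.
Qed.

Lemma ltn_roots_below v w :
  (roots_below (root_key v) < roots_below (root_key w))%N = (root_key v < root_key w)%N.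
Proof.
apply/idP/idP; last exact: roots_below_root_key.
by apply: contraLR; rewrite -!leqNgt; apply: roots_below_mono.
Qed.

Lemma eq_roots_below v w :
  (roots_below (root_key v) == roots_below (root_key w)) = conn v w.
Proof.
rewrite -eq_root_key; apply/idP/idP => [|/eqP-> //].
by apply: contraLR; rewrite neq_ltn -!ltn_roots_below -neq_ltn.
Qed.

Lemma roots_below_lt_card v : (roots_below (root_key v) < #|roots|)%N.
Proof.
apply: proper_card; rewrite properE; apply/andP; split.
  by apply/subsetP => w; rewrite !inE => /andP[].
by apply/subsetPn; exists (comp_root v); rewrite !inE comp_rootK ?eqxx ?ltnn.
Qed.

End Components.

Section ComponentIndex.
Variables (V : finType) (le : rel V) (H : {set V * V}).
Hypothesis le_total : total_order le.
Local Notation conn := (connect (und H)).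
Local Notation key := (order_rank le).
Local Notation key_inj := (order_rank_inj le_total).

Lemma isroot_roots w : isroot le H w = (w \in roots H key).
Proof.
rewrite /isroot inE; apply/forallP/eqP => [min_w | root_w x].
  apply: key_inj; apply/eqP; rewrite eqn_leq root_key_min ?connect0 //= -le_order_rank //.
  exact: (implyP (min_w _)) (conn_comp_root H key w).
by apply/implyP => conn_wx; rewrite le_order_rank // -{1}root_w; apply: root_key_min.
Qed.

Lemma cidx_roots_below v : cidx le H v = roots_below H key (root_key H key v).
Proof.
rewrite /cidx /roots_below; apply: eq_card => w; rewrite !inE isroot_roots inE.
case root_w: (comp_root H key w == w) => //=.
apply/andP/idP => [[not_vw /forallP/(_ (comp_root H key v))] | lt_w].
  rewrite conn_comp_root /= le_order_rank // => le_w.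
  rewrite ltn_neqAle le_w andbT; apply: contra not_vw => /eqP/key_inj->.
  exact: conn_comp_root.
split.
  apply: contraL lt_w => conn_vw.
  by rewrite /root_key (comp_root_eq key_inj conn_vw) (eqP root_w) ltnn.
apply/forallP => x; apply/implyP => conn_vx; rewrite le_order_rank //.
exact/ltnW/(leq_trans lt_w)/root_key_min.
Qed.

Lemma cidx_lt_ncomp v : (cidx le H v < ncomp H)%N.
Proof.
by rewrite cidx_roots_below (ncomp_roots H key_inj) (roots_below_lt_card H key_inj).
Qed.

Lemma eq_cidx v w : (cidx le H v == cidx le H w) = conn v w.
Proof. by rewrite !cidx_roots_below (eq_roots_below H key_inj). Qed.

Lemma cidx_comp_root (key' : V -> nat) v : cidx le H (comp_root H key' v) = cidx le H v.
Proof. by apply/eqP; rewrite eq_cidx conn_sym conn_comp_root. Qed.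

Lemma cidx_inj_roots (key' : V -> nat) :
  injective key' -> {in roots H key' &, injective (cidx le H)}.
Proof.
move=> key'_inj x y; rewrite !inE => /eqP root_x /eqP root_y /eqP.
by rewrite eq_cidx => /(comp_root_eq key'_inj); rewrite root_x root_y.
Qed.

Lemma cidx_onto j : (j < ncomp H)%N -> exists v, cidx le H v = j.
Proof.
rewrite (ncomp_roots H key_inj) => lt_j.
have lt_card x : x \in roots H key -> (cidx le H x < #|roots H key|)%N.
  by rewrite -(ncomp_roots H key_inj) cidx_lt_ncomp.
by have [v _ <-] := onto_of_inj_bounded (cidx_inj_roots key_inj) lt_card lt_j; exists v.
Qed.

End ComponentIndex.

(** * Adding an edge *)

Section AddEdge.
Variables (V : finType) (H : {set V * V}) (u w : V).
Local Notation conn := (connect (und H)).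
Local Notation H' := ((u, w) |: H).
Local Notation conn' := (connect (und H')).

Definition merged (z : V) : bool := conn z u || conn z w.

Lemma merged_conn y z : conn y z -> merged y = merged z.
Proof. by move=> conn_yz; rewrite /merged !(same_connect (@conn_sym _ H) conn_yz). Qed.

Lemma merged_u : merged u. Proof. by rewrite /merged connect0. Qed.
Lemma merged_w : merged w. Proof. by rewrite /merged connect0 orbT. Qed.

Lemma und_setU1 x y :
  und H' x y = [|| und H x y, (x, y) == (u, w) | (y, x) == (u, w)].
Proof.
rewrite /und /= !in_setU1.
by case: ((x, y) \in H); case: ((y, x) \in H); case: ((x, y) == _); case: ((y, x) == _).
Qed.

Lemma conn_setU1 x y : conn x y -> conn' x y.
Proof. by apply: connect_sub => a b und_ab; apply: connect1; rewrite und_setU1 und_ab. Qed.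

Lemma conn_setU1_merged x : merged x -> conn' x u.
Proof.
case/orP=> [/conn_setU1 // | /conn_setU1 conn_xw]; apply: connect_trans conn_xw _.
by apply: connect1; rewrite und_setU1 eqxx !orbT.
Qed.

Lemma connect_setU1 x y : conn' x y = conn x y || merged x && merged y.
Proof.
apply/idP/idP => [|/orP[/conn_setU1 // | /andP[/conn_setU1_merged conn_xu]]]; last first.
  by move=> /conn_setU1_merged conn_yu; rewrite (connect_trans conn_xu) // conn_sym.
pose reach := [pred z | conn x z || merged x && merged z].
have reach_closed : closed (und H') reach.
  move=> a b; rewrite und_setU1 => /orP[und_ab | /orP[] /eqP[-> ->]].
    have conn_ab : conn a b by apply: connect1.
    rewrite !inE /= (merged_conn conn_ab) !(@conn_sym _ H x).
    by rewrite (same_connect (@conn_sym _ H) conn_ab).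
  1,2: by rewrite !inE /= merged_u merged_w /merged; case: (conn x u); case: (conn x w).
by move=> /(closed_connect reach_closed); rewrite !inE /= connect0 => <-.
Qed.

Variables (key : V -> nat).
Hypothesis key_inj : injective key.
Hypothesis uw_disconnected : ~~ conn u w.

Local Notation ru := (comp_root H key u).
Local Notation rw := (comp_root H key w).

Definition kept_root : V := if (key ru < key rw)%N then ru else rw.
Definition lost_root : V := if (key ru < key rw)%N then rw else ru.

Lemma key_kept_root : key kept_root = minn (root_key H key u) (root_key H key w).
Proof. by rewrite /kept_root /minn /root_key; case: ifP. Qed.

Lemma key_lost_root : key lost_root = maxn (root_key H key u) (root_key H key w).
Proof. by rewrite /lost_root /maxn /root_key; case: ifP. Qed.

Lemma comp_root_uw_neq : ru != rw.
Proof.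
apply: contraNneq uw_disconnected => eq_r.
by rewrite -(eq_root_key H key_inj) /root_key eq_r.
Qed.

Lemma kept_neq_lost : kept_root != lost_root.
Proof.
rewrite /kept_root /lost_root.
by case: ifP => _; [exact: comp_root_uw_neq | rewrite eq_sym comp_root_uw_neq].
Qed.

Lemma mem_kept_lost x : (x \in [:: ru; rw]) = (x \in [:: kept_root; lost_root]).
Proof. by rewrite /kept_root /lost_root !inE; case: ifP; rewrite // orbC. Qed.

Lemma lost_root_in : lost_root \in roots H key.
Proof. by rewrite /lost_root; case: ifP; rewrite comp_root_in. Qed.

Lemma kept_root_in : kept_root \in roots H key :\ lost_root.
Proof.
by rewrite in_setD1 kept_neq_lost /kept_root; case: ifP; rewrite comp_root_in.
Qed.

Lemma merged_ru : merged ru.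
Proof. by rewrite /merged conn_sym conn_comp_root. Qed.

Lemma merged_rw : merged rw.
Proof. by rewrite /merged [conn rw w]conn_sym conn_comp_root orbT. Qed.

Lemma merged_kept_root : merged kept_root.
Proof. by rewrite /kept_root; case: ifP; rewrite ?merged_ru ?merged_rw. Qed.

Lemma merged_roots x : merged x -> (x \in roots H key) = (x \in [:: ru; rw]).
Proof.
move=> merged_x; apply/idP/idP; last by rewrite !inE => /orP[]/eqP->; rewrite comp_rootK.
rewrite !inE => /eqP <-.
by case/orP: merged_x => /(comp_root_eq key_inj)->; rewrite eqxx ?orbT.
Qed.

Lemma root_key_setU1 x : root_key H' key x =
  if merged x then minn (root_key H key u) (root_key H key w) else root_key H key x.
Proof.
have := conn_comp_root H' key x; rewrite connect_setU1 => conn_x.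
apply/eqP; rewrite eqn_leq; case: ifP => merged_x; rewrite merged_x /= in conn_x.
all: apply/andP; split.
- by rewrite leq_min !root_key_min // connect_setU1 merged_x ?merged_ru ?merged_rw orbT.
- have : merged (comp_root H' key x).
    by case/orP: conn_x => [/merged_conn <- | ].
  rewrite geq_min; case/orP => conn_r; apply/orP; [left | right].
    by rewrite root_key_min // conn_sym.
  by rewrite root_key_min // conn_sym.
- by rewrite root_key_min ?conn_setU1 ?conn_comp_root.
- by rewrite root_key_min // -(orbF (conn _ _)).
Qed.

Lemma roots_setU1 : roots H' key = roots H key :\ lost_root.
Proof.
apply/setP => x; rewrite in_setD1 (in_roots H' key_inj) root_key_setU1.
case: ifP => merged_x; last first.
  rewrite -(in_roots H key_inj) andb_idl // => _.
  apply: contraFneq merged_x => ->.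
  by rewrite /lost_root; case: ifP; rewrite ?merged_ru ?merged_rw.
rewrite merged_roots // mem_kept_lost -key_kept_root (inj_eq key_inj) !inE.
have [-> | _] := eqVneq x lost_root; last by rewrite orbF eq_sym.
by rewrite (negbTE kept_neq_lost).
Qed.

Lemma roots_below_setU1 K :
  roots_below H' key K = (roots_below H key K - (key lost_root < K))%N.
Proof.
rewrite /roots_below roots_setU1 [in RHS](cardsD1 lost_root) in_set lost_root_in /=.
by rewrite addKn; apply: eq_card => x; rewrite !inE andbA.
Qed.

Lemma ncomp_setU1 : ncomp H' = (ncomp H).-1.
Proof.
rewrite (ncomp_roots H' key_inj) (ncomp_roots H key_inj) roots_setU1.
by rewrite [in RHS](cardsD1 lost_root) lost_root_in.
Qed.

End AddEdge.

Section Multipaths.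
Variable V : finType.

Lemma card_path_edges (H : {set V * V}) (s : seq V) (v : V) : uniq s ->
  (forall x y, x \in s -> ((x, y) \in H) =
     [exists i : 'I_(size s).-1, (nth v s i == x) && (nth v s i.+1 == y)]) ->
  #|[set p in H | p.1 \in s]| = (size s).-1.
Proof.
move=> uniq_s edges_s.
have lt_size (i : 'I_(size s).-1) : (i < size s)%N by have := ltn_ord i; lia.
have -> : [set p in H | p.1 \in s] = [set (nth v s i, nth v s i.+1) | i : 'I_(size s).-1].
  apply/setP => [[x y]]; rewrite !inE /=.
  apply/andP/imsetP => [[xy_in x_in] | [i _ [-> ->]]].
    by move: xy_in; rewrite edges_s // => /existsP[i /andP[/eqP <- /eqP <-]]; exists i.
  by rewrite mem_nth // edges_s ?mem_nth //; split=> //; apply/existsP; exists i; rewrite !eqxx.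
rewrite card_imset ?card_ord // => i j [eq_ij _]; apply/val_inj/eqP.
by rewrite -(nth_uniq v (lt_size i) (lt_size j) uniq_s) eq_ij.
Qed.

Lemma multipath_setU1_disconnected (E H : {set V * V}) (u w : V) :
  multipath E H -> multipath E ((u, w) |: H) -> (u, w) \notin H ->
  ~~ connect (und H) u w.
Proof.
move=> [_ path_H] [_ path_H'] uw_notin; apply/negP => conn_uw.
have [s [uniq_s mem_s edges_s]] := path_H u.
have [s' [uniq_s' mem_s' path_edges_s']] := path_H' u.
have eq_s : s =i s'.
  move=> x; rewrite mem_s mem_s' connect_setU1 merged_u /=.
  apply/esym/orb_idr => /orP[conn_xu | conn_xw]; first by rewrite conn_sym.
  by apply: connect_trans conn_uw _; rewrite conn_sym.
have u_in : u \in s by rewrite mem_s connect0.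
have edges_s' : [set p in (u, w) |: H | p.1 \in s'] = (u, w) |: [set p in H | p.1 \in s].
  apply/setP => [[x y]]; rewrite !inE /= -eq_s.
  by case: (eqVneq (x, y) (u, w)) => [[-> ->] | ]; rewrite ?u_in.
have := card_path_edges uniq_s' path_edges_s'; rewrite edges_s' cardsU1 inE (negbTE uw_notin).
rewrite (card_path_edges uniq_s edges_s) -(perm_size (uniq_perm uniq_s uniq_s' eq_s)).
by rewrite /= add1n => /esym /n_Sn.
Qed.

End Multipaths.

(* Deleting entry M of a list moves entry q to position [del_pos M q];
   [ins_pos M] maps positions back. *)
Definition del_pos (M q : nat) : nat := (q - (M < q))%N.
Definition ins_pos (M k : nat) : nat := if (k < M)%N then k else k.+1.

Lemma del_posK M q : q != M -> ins_pos M (del_pos M q) = q.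
Proof. by rewrite /del_pos /ins_pos; case: (ltnP M q) => /= ? ?; case: ltnP; lia. Qed.

Lemma ltn_del_pos M p q : p != M -> q != M -> (del_pos M p < del_pos M q)%N = (p < q)%N.
Proof. by rewrite /del_pos; case: (ltnP M p); case: (ltnP M q) => /=; lia. Qed.

Lemma neq_maxn s t p : p != s -> p != t -> p != maxn s t.
Proof. by rewrite /maxn; case: ifP. Qed.

Lemma del_pos_max_neq_min s t q :
  s != t -> q != s -> q != t -> del_pos (maxn s t) q != minn s t.
Proof. by rewrite /del_pos; case: ltnP => /=; lia. Qed.

Section AddEdgeIndex.
Variables (V : finType) (le : rel V) (H : {set V * V}) (u w : V).
Hypothesis le_total : total_order le.
Hypothesis uw_disconnected : ~~ connect (und H) u w.
Local Notation H' := ((u, w) |: H).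
Local Notation key := (order_rank le).
Local Notation key_inj := (order_rank_inj le_total).

Lemma cidx_uw_neq : cidx le H u != cidx le H w.
Proof. by rewrite eq_cidx. Qed.

Lemma cidx_setU1 x : cidx le H' x =
  if merged H u w x then minn (cidx le H u) (cidx le H w)
  else del_pos (maxn (cidx le H u) (cidx le H w)) (cidx le H x).
Proof.
rewrite !cidx_roots_below // (roots_below_setU1 key_inj uw_disconnected).
rewrite root_key_setU1 key_lost_root; case: ifP => _.
  rewrite ltnNge leq_max geq_minl subn0.
  have [le_uw | /ltnW le_wu] := leqP (root_key H key u) (root_key H key w).
    by rewrite (minn_idPl (roots_below_mono H key le_uw)).
  by rewrite (minn_idPr (roots_below_mono H key le_wu)).
by rewrite /del_pos !gtn_max !(ltn_roots_below H key_inj).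
Qed.

End AddEdgeIndex.

(** * Merging and reordering tensor factors *)

Section MergeFactors.
Variables (R : comPzRingType) (A : algType R).
Local Open Scope ring_scope.

Lemma size_merge (a : seq A) s t : s != t -> (s < size a)%N -> (t < size a)%N ->
  size (Defs.merge a s t) = (size a).-1.
Proof.
move=> ne_st lt_s lt_t; rewrite /Defs.merge size_set_nth size_cat size_take size_drop.
by rewrite gtn_max lt_s lt_t /=; lia.
Qed.

Lemma nth_merge (a : seq A) s t k : s != t -> (s < size a)%N -> (t < size a)%N ->
  (k < (size a).-1)%N -> nth 0 (Defs.merge a s t) k =
  if k == minn s t then nth 0 a s * nth 0 a t else nth 0 a (ins_pos (maxn s t) k).
Proof.
move=> ne_st lt_s lt_t lt_k; rewrite /Defs.merge nth_set_nth /=; case: ifP => // _.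
have lt_max : (maxn s t < size a)%N by rewrite gtn_max lt_s lt_t.
rewrite nth_cat size_take lt_max /ins_pos; case: ifP => lt_kM; first by rewrite nth_take.
by rewrite nth_drop; congr nth; lia.
Qed.

End MergeFactors.

(* The la-position of the component at lb-position j (junk 0 for j out of
   range); [reorder] lists the factors of [a] in lb-order, leaving lists of
   the wrong length unchanged. *)
Definition comp_perm (V : finType) (la lb : rel V) (H : {set V * V}) (j : nat) : nat :=
  if [pick v | cidx lb H v == j] is Some v then cidx la H v else 0%N.

Definition reorder (T : Type) (x0 : T) (V : finType) (la lb : rel V)
    (H : {set V * V}) (a : seq T) : seq T :=
  if size a == ncomp H then mkseq (fun j => nth x0 a (comp_perm la lb H j)) (size a)
  else a.

Section ComponentPermutation.
Variables (V : finType) (la lb : rel V) (H : {set V * V}).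
Hypotheses (la_total : total_order la) (lb_total : total_order lb).

Lemma comp_perm_cidx v : comp_perm la lb H (cidx lb H v) = cidx la H v.
Proof.
rewrite /comp_perm; case: pickP => [v' | /(_ v)]; last by rewrite eqxx.
by rewrite eq_cidx // => conn_v; apply/eqP; rewrite eq_cidx.
Qed.

Lemma comp_perm_lt j : (j < ncomp H)%N -> (comp_perm la lb H j < ncomp H)%N.
Proof. by move=> /(cidx_onto lb_total)[v <-]; rewrite comp_perm_cidx cidx_lt_ncomp. Qed.

End ComponentPermutation.

Lemma comp_permK (V : finType) (la lb : rel V) (H : {set V * V}) :
  total_order la -> total_order lb ->
  forall j, (j < ncomp H)%N -> comp_perm lb la H (comp_perm la lb H j) = j.
Proof.
move=> la_total lb_total j /(cidx_onto lb_total)[v <-].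
by rewrite comp_perm_cidx // comp_perm_cidx.
Qed.

Section Reorder.
Variables (T : Type) (x0 : T) (V : finType) (H : {set V * V}).

Lemma size_reorder la lb a : size (reorder x0 la lb H a) = size a.
Proof. by rewrite /reorder; case: ifP; rewrite ?size_mkseq. Qed.

Lemma nth_reorder la lb a j : size a = ncomp H -> (j < size a)%N ->
  nth x0 (reorder x0 la lb H a) j = nth x0 a (comp_perm la lb H j).
Proof. by move=> size_a lt_j; rewrite /reorder size_a eqxx nth_mkseq -?size_a. Qed.

Variables (la lb : rel V).
Hypotheses (la_total : total_order la) (lb_total : total_order lb).

Lemma reorderK a : reorder x0 lb la H (reorder x0 la lb H a) = a.
Proof.
have [size_a | /negbTE ne_a] := eqVneq (size a) (ncomp H); last by rewrite /reorder !ne_a.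
apply: (@eq_from_nth _ x0); rewrite !size_reorder // => j lt_j.
rewrite !nth_reorder ?size_reorder ?comp_permK -?size_a //.
by rewrite size_a comp_perm_lt -?size_a.
Qed.

Lemma reorder_set_nth a i z : size a = ncomp H -> (i < size a)%N ->
  reorder x0 la lb H (set_nth x0 a i z) =
  set_nth x0 (reorder x0 la lb H a) (comp_perm lb la H i) z.
Proof.
move=> size_a lt_i; have size_set : size (set_nth x0 a i z) = size a.
  by rewrite size_set_nth; apply/maxn_idPr.
apply: (@eq_from_nth _ x0).
  rewrite size_set_nth !size_reorder size_set; apply/esym/maxn_idPr.
  by rewrite size_a comp_perm_lt -?size_a.
rewrite size_reorder size_set => j lt_j.
rewrite nth_reorder ?size_set // !nth_set_nth /= nth_reorder //.
by congr (if _ then _ else _); apply/eqP/eqP => [<- | ->]; rewrite comp_permK // -size_a.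
Qed.

Lemma exists_reorder_set_nth a i : (i < size a)%N -> exists a' i',
  (i' < size a')%N /\ forall z, reorder x0 la lb H (set_nth x0 a i z) = set_nth x0 a' i' z.
Proof.
move=> lt_i; have [size_a | ne_a] := eqVneq (size a) (ncomp H).
  exists (reorder x0 la lb H a), (comp_perm lb la H i); split=> [|z].
    by rewrite size_reorder size_a comp_perm_lt -?size_a.
  by rewrite reorder_set_nth.
exists a, i; split=> // z.
by rewrite /reorder size_set_nth (maxn_idPr lt_i) (negbTE ne_a).
Qed.

Lemma nth_reorder_cidx a x : size a = ncomp H ->
  nth x0 (reorder x0 la lb H a) (cidx lb H x) = nth x0 a (cidx la H x).
Proof.
by move=> size_a; rewrite nth_reorder ?comp_perm_cidx // size_a cidx_lt_ncomp.
Qed.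

End Reorder.

Section MergeReorder.
Variables (R : comPzRingType) (A : algType R) (V : finType) (H : {set V * V}) (u w : V).
Hypothesis uw_disconnected : ~~ connect (und H) u w.
Local Notation H' := ((u, w) |: H).
Local Open Scope ring_scope.

Lemma nth_merge_cidx (le : rel V) (a : seq A) v : total_order le -> size a = ncomp H ->
  nth 0 (Defs.merge a (cidx le H u) (cidx le H w)) (cidx le H' v) =
  if merged H u w v then nth 0 a (cidx le H u) * nth 0 a (cidx le H w)
  else nth 0 a (cidx le H v).
Proof.
move=> le_total size_a.
have lt_size x : (cidx le H x < size a)%N by rewrite size_a cidx_lt_ncomp.
have lt_size' : (cidx le H' v < (size a).-1)%N.
  by rewrite size_a -(ncomp_setU1 (order_rank_inj le_total) uw_disconnected) cidx_lt_ncomp.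
rewrite nth_merge ?cidx_uw_neq // cidx_setU1 //.
case merged_v: (merged H u w v) => /=; first by rewrite eqxx.
have [ne_u ne_w] : cidx le H v != cidx le H u /\ cidx le H v != cidx le H w.
  by move/norP: (negbT merged_v) => [not_vu not_vw]; rewrite !eq_cidx.
have ne_uw := cidx_uw_neq le_total uw_disconnected.
by rewrite (negbTE (del_pos_max_neq_min ne_uw ne_u ne_w)) (del_posK (neq_maxn ne_u ne_w)).
Qed.

Variables (la lb : rel V).
Hypotheses (la_total : total_order la) (lb_total : total_order lb).

Lemma reorder_merge (a : seq A) : size a = ncomp H ->
  reorder 0 la lb H' (Defs.merge a (cidx la H u) (cidx la H w)) =
  Defs.merge (reorder 0 la lb H a) (cidx lb H u) (cidx lb H w).
Proof.
move=> size_a; have size_b : size (reorder 0 la lb H a) = ncomp H by rewrite size_reorder.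
have size_merge_cidx (le : rel V) (b : seq A) : total_order le -> size b = ncomp H ->
    size (Defs.merge b (cidx le H u) (cidx le H w)) = ncomp H'.
  move=> le_total size_b'; rewrite (ncomp_setU1 (order_rank_inj le_total) uw_disconnected).
  by rewrite size_merge ?cidx_uw_neq ?size_b' ?cidx_lt_ncomp.
apply: (@eq_from_nth _ 0); first by rewrite size_reorder !size_merge_cidx.
rewrite size_reorder size_merge_cidx // => _ /(cidx_onto lb_total)[v <-].
rewrite nth_reorder ?comp_perm_cidx ?size_merge_cidx ?cidx_lt_ncomp //.
by rewrite !nth_merge_cidx //; case: ifP; rewrite ?nth_reorder_cidx.
Qed.

End MergeReorder.

(** * Parity of inversions *)

Lemma odd_sum_congr (I : finType) (S : {set I}) (g h : I -> nat) :
  {in S, forall x, odd (g x) = odd (h x)} ->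
  odd (\sum_(x in S) g x) = odd (\sum_(x in S) h x).
Proof.
move=> odd_gh; apply: (big_ind2 (fun m n => odd m = odd n)) => // m1 n1 m2 n2 e1 e2.
by rewrite !oddD e1 e2.
Qed.

Lemma sum_pairs_setD1 (I : finType) (S : {set I}) (a : I) (F : I -> I -> nat) :
  a \in S -> F a a = 0%N ->
  (\sum_(x in S) \sum_(y in S) F x y =
   \sum_(x in S :\ a) (F a x + F x a) + \sum_(x in S :\ a) \sum_(y in S :\ a) F x y)%N.
Proof.
move=> S_a F_aa.
rewrite (big_setD1 a S_a) /= [X in (X + _)%N](big_setD1 a S_a) /= F_aa add0n.
under [X in (_ + X)%N]eq_bigr => x _ do rewrite (big_setD1 a S_a).
by rewrite /= !big_split /=; lia.
Qed.

Lemma odd_crossed_pos p q p' q' : p != q -> p' != q' ->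
  odd (((p < q) && (q' < p')) + ((q < p) && (p' < q')))%N = (p < q)%N (+) (p' < q')%N.
Proof. by case: (ltngtP p q); case: (ltngtP p' q'). Qed.

Lemma lt_min_del_pos s t p : s != t -> p != s -> p != t ->
  (minn s t < del_pos (maxn s t) p)%N = (minn s t < p)%N.
Proof. by rewrite /del_pos; case: ltnP => /=; lia. Qed.

Lemma lt_max_addb s t p : p != s -> p != t ->
  (s < p)%N (+) (t < p)%N (+) (minn s t < p)%N = ~~ (p < maxn s t)%N.
Proof.
move=> ne_s ne_t.
by case: (ltnP s p); case: (ltnP t p); case: (ltnP (minn s t) p);
  case: (ltnP p (maxn s t)) => //=; lia.
Qed.

Lemma odd_sigma s t : odd (sigma s t) = (s < t)%N (+) odd (maxn s t).
Proof. by rewrite /sigma /maxn; case: ltnP => //= lt_st; rewrite addbT. Qed.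

Lemma odd_pred_maxn s t : s != t -> odd (maxn s t).-1 = ~~ odd (maxn s t).
Proof. by move=> ne_st; rewrite -[in RHS](@prednK (maxn s t)) /= ?negbK //; lia. Qed.

Definition crossed (V : finType) (la lb : rel V) (K : {set V * V}) (x y : V) : nat :=
  (cidx la K x < cidx la K y) && (cidx lb K y < cidx lb K x).

Definition inversions (V : finType) (la lb : rel V) (K : {set V * V}) : nat :=
  \sum_(x in roots K (order_rank la)) \sum_(y in roots K (order_rank la)) crossed la lb K x y.

Lemma crossedxx (V : finType) (la lb : rel V) (K : {set V * V}) x : crossed la lb K x x = 0%N.
Proof. by rewrite /crossed ltnn. Qed.

Lemma odd_crossed (V : finType) (la lb : rel V) (K : {set V * V}) x y :
  total_order la -> total_order lb -> ~~ connect (und K) x y ->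
  odd (crossed la lb K x y + crossed la lb K y x) =
  (cidx la K x < cidx la K y)%N (+) (cidx lb K x < cidx lb K y)%N.
Proof. by move=> la_total lb_total not_xy; rewrite odd_crossed_pos ?eq_cidx. Qed.

Section InversionParity.
Variables (V : finType) (la lb : rel V) (H : {set V * V}) (u w : V).
Hypotheses (la_total : total_order la) (lb_total : total_order lb).
Hypothesis uw_disconnected : ~~ connect (und H) u w.
Local Notation conn := (connect (und H)).
Local Notation H' := ((u, w) |: H).
Local Notation key := (order_rank la).
Local Notation key_inj := (order_rank_inj la_total).
Local Notation S := (roots H key).
Local Notation ru := (comp_root H key u).
Local Notation rw := (comp_root H key w).
Local Notation kept := (kept_root H u w key).
Local Notation c := (crossed la lb H).
Local Notation c' := (crossed la lb H').
Local Notation pos le x := (cidx le H x).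
Local Notation max_pos le := (maxn (cidx le H u) (cidx le H w)).

Definition other_roots : {set V} := S :\ ru :\ rw.

Lemma comp_root_w_in : rw \in S :\ ru.
Proof.
by rewrite in_setD1 eq_sym (comp_root_uw_neq key_inj uw_disconnected) (comp_root_in _ key_inj).
Qed.

Lemma other_roots_not_merged x : x \in other_roots -> ~~ merged H u w x.
Proof.
rewrite !inE => /and3P[x_rw x_ru /eqP root_x]; apply/norP; split.
  by apply: contra x_ru => /(comp_root_eq key_inj); rewrite root_x => ->.
by apply: contra x_rw => /(comp_root_eq key_inj); rewrite root_x => ->.
Qed.

Lemma cidx_other_roots le x : total_order le -> x \in other_roots ->
  pos le x != pos le u /\ pos le x != pos le w.
Proof. by move=> le_total /other_roots_not_merged /norP[]; rewrite !eq_cidx. Qed.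

Lemma cidx_setU1_other_roots le x : total_order le -> x \in other_roots ->
  cidx le H' x = del_pos (max_pos le) (pos le x).
Proof.
by move=> le_total /other_roots_not_merged /negbTE merged_x; rewrite cidx_setU1 ?merged_x.
Qed.

Lemma roots_setU1_minus_kept : roots H' key :\ kept = other_roots.
Proof.
apply/setP => x; have := mem_kept_lost H u w key x.
rewrite (roots_setU1 key_inj uw_disconnected) !inE => mem_x.
by rewrite !andbA -!negb_or [(x == rw) || _]orbC mem_x.
Qed.

Lemma crossed_other_roots x y : x \in other_roots -> y \in other_roots -> c' x y = c x y.
Proof.
move=> x_in y_in; have [xa_u xa_w] := cidx_other_roots la_total x_in.
have [ya_u ya_w] := cidx_other_roots la_total y_in.
have [xb_u xb_w] := cidx_other_roots lb_total x_in.
have [yb_u yb_w] := cidx_other_roots lb_total y_in.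
by rewrite /crossed !cidx_setU1_other_roots // !ltn_del_pos // neq_maxn.
Qed.

Lemma inversions_split : inversions la lb H =
  (c ru rw + c rw ru + \sum_(x in other_roots) (c ru x + c x ru + (c rw x + c x rw))
   + \sum_(x in other_roots) \sum_(y in other_roots) c x y)%N.
Proof.
rewrite /inversions (sum_pairs_setD1 (comp_root_in H key_inj u)) ?crossedxx //.
rewrite (sum_pairs_setD1 comp_root_w_in) ?crossedxx // (big_setD1 rw comp_root_w_in) /=.
by rewrite -/other_roots !big_split /=; lia.
Qed.

Lemma inversions_setU1 : inversions la lb H' =
  (\sum_(x in other_roots) (c' kept x + c' x kept)
   + \sum_(x in other_roots) \sum_(y in other_roots) c x y)%N.
Proof.
have kept_in : kept \in roots H' key.
  by rewrite (roots_setU1 key_inj uw_disconnected) (kept_root_in key_inj uw_disconnected).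
rewrite /inversions (sum_pairs_setD1 kept_in) ?crossedxx // roots_setU1_minus_kept.
congr (_ + _)%N; apply: eq_bigr => x x_in.
by apply: eq_bigr => y y_in; apply: crossed_other_roots.
Qed.

Lemma sum_other_roots_lt_max le : total_order le ->
  (\sum_(x in other_roots) (pos le x < max_pos le) = (max_pos le).-1)%N.
Proof.
move=> le_total; have ne_uw := cidx_uw_neq le_total uw_disconnected.
have lt_card x : (pos le x < #|S|)%N by rewrite -(ncomp_roots H key_inj) cidx_lt_ncomp.
have le_max : (max_pos le <= #|S|)%N by rewrite geq_max !(ltnW (lt_card _)).
have := sum_pos_below (cidx_inj_roots le_total key_inj) (fun x _ => lt_card x) le_max.
rewrite (big_setD1 ru (comp_root_in H key_inj u)) (big_setD1 rw comp_root_w_in) /= -/other_roots.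
have one_below : ((pos le u < max_pos le) + (pos le w < max_pos le) = 1)%N.
  by rewrite /maxn; case: (ltngtP (pos le u) (pos le w)) ne_uw => // lt _; rewrite lt ltnn.
rewrite !cidx_comp_root // addnA one_below add1n => sum_eq.
by rewrite -[in RHS]sum_eq.
Qed.

Lemma odd_crossed_at x : x \in other_roots ->
  odd (c ru x + c x ru + (c rw x + c x rw) + (c' kept x + c' x kept)) =
  odd ((pos la x < max_pos la) + (pos lb x < max_pos lb)).
Proof.
move=> x_in; have not_merged := other_roots_not_merged x_in.
have [xa_u xa_w] := cidx_other_roots la_total x_in.
have [xb_u xb_w] := cidx_other_roots lb_total x_in.
have disconnected_from y : merged H u w y -> ~~ conn y x.
  by move=> merged_y; apply: contraNN not_merged => /merged_conn <-.
have disconnected'_kept : ~~ connect (und H') kept x.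
  rewrite connect_setU1 (negbTE not_merged) andbF orbF.
  exact/disconnected_from/merged_kept_root.
rewrite 2!oddD !odd_crossed ?disconnected_from ?merged_ru ?merged_rw //.
rewrite !cidx_comp_root // !(cidx_setU1_other_roots _ x_in) // !cidx_setU1 // merged_kept_root.
have ne_a := cidx_uw_neq la_total uw_disconnected.
have ne_b := cidx_uw_neq lb_total uw_disconnected.
rewrite !lt_min_del_pos // oddD !oddb.
rewrite [X in X (+) _]addbACA addbACA !lt_max_addb //.
by rewrite addbN addNb negbK.
Qed.

Lemma odd_inversions_setU1 :
  odd (inversions la lb H' + inversions la lb H) =
  odd (sigma (pos la u) (pos la w) + sigma (pos lb u) (pos lb w)).
Proof.
rewrite inversions_setU1 inversions_split.
set T := (\sum_(x in other_roots) \sum_(y in other_roots) c x y)%N.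
have -> : forall P Q Q' : nat, (P + T + (Q + Q' + T) = Q + (Q' + P) + T.*2)%N.
  by move=> *; rewrite -addnn; lia.
rewrite oddD odd_double addbF -big_split /= oddD (odd_sum_congr odd_crossed_at) big_split /=.
have ru_rw_disconnected : ~~ conn ru rw.
  apply: contra uw_disconnected => conn_r.
  apply: connect_trans (conn_comp_root H key u) (connect_trans conn_r _).
  by rewrite conn_sym conn_comp_root.
rewrite !sum_other_roots_lt_max // odd_crossed // !cidx_comp_root //.
rewrite oddD !odd_pred_maxn ?cidx_uw_neq // oddD !odd_sigma.
by rewrite addbN addNb negbK addbACA.
Qed.

End InversionParity.

(** * The isomorphism *)

Definition ref_order (V : finType) : rel V := fun x y => (enum_rank x <= enum_rank y)%N.

Lemma ref_order_total (V : finType) : total_order (@ref_order V).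
Proof.
split=> [x | x y le_xy | x y z | x y]; rewrite /ref_order.
- exact: leqnn.
- by apply/enum_rank_inj/val_inj/eqP; rewrite eqn_leq.
- exact: leq_trans.
- exact: leq_total.
Qed.

Section Relabel.
Variables (R : comPzRingType) (A : algType R) (V : finType).
Local Open Scope ring_scope.

Definition relabel_sign (la lb : rel V) (H : {set V * V}) : R :=
  (-1) ^+ (inversions la (@ref_order V) H + inversions lb (@ref_order V) H).

Definition reorder_gen (la lb : rel V) (g : Gen A V) : Gen A V :=
  (g.1, reorder 0 la lb g.1 g.2).

Definition relabel (la lb : rel V) (p : R * Gen A V) : R * Gen A V :=
  (relabel_sign la lb p.2.1 * p.1, reorder_gen la lb p.2).

Lemma equivq_refl (f : FS A V) : equivq f f.
Proof. by exists [::]; split=> // g; rewrite subrr big_nil. Qed.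

Lemma cdeg_map_relabel la lb E n (f : FS A V) :
  cdeg E n f -> cdeg E n (map (relabel la lb) f).
Proof.
by move=> cdeg_f _ /mapP[p /cdeg_f[path_p card_p size_p] ->]; split; rewrite //= size_reorder.
Qed.

Lemma map_relabel_scale la lb c (f : FS A V) :
  map (relabel la lb) (scaleFS c f) = scaleFS c (map (relabel la lb) f).
Proof. by rewrite /scaleFS -!map_comp; apply: eq_map => p; rewrite /relabel /= mulrCA. Qed.

Variables (la lb : rel V).
Hypotheses (la_total : total_order la) (lb_total : total_order lb).

Lemma relabel_signK H : relabel_sign lb la H * relabel_sign la lb H = 1.
Proof.
by rewrite /relabel_sign -exprD [(inversions lb _ _ + _)%N]addnC -signr_odd oddD addbb.
Qed.

Lemma relabelK : cancel (relabel la lb) (relabel lb la).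
Proof.
by case=> r [H a]; rewrite /relabel /reorder_gen /= reorderK // mulrA relabel_signK mul1r.
Qed.

Lemma coef_map_relabel (f : FS A V) (g : Gen A V) :
  coef (map (relabel la lb) f) g = relabel_sign la lb g.1 * coef f (reorder_gen lb la g).
Proof.
rewrite /coef big_map mulr_sumr; apply: eq_big => [[r [H a]] | [r [H a]] /eqP <-] //=.
by case: g => H' a'; apply/eqP/eqP => [<- | ->]; rewrite /reorder_gen /= reorderK.
Qed.

Lemma basic_map_relabel h : basic h -> basic (map (relabel la lb) h).
Proof.
case=> [[r [H [a [i [x [y [lt_i ->]]]]]]] | [r [c [H [a [i [x [lt_i ->]]]]]]]];
  have [a' [i' [lt_i' reorder_set]]] := exists_reorder_set_nth 0 H la_total lb_total lt_i.
- left; exists (relabel_sign la lb H * r), H, a', i', x, y.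
  by rewrite /relabel /reorder_gen /= !reorder_set !mulrN.
- right; exists (relabel_sign la lb H * r), c, H, a', i', x.
  by rewrite /relabel /reorder_gen /= !reorder_set mulrN mulrA.
Qed.

Lemma equivq_map_relabel f g :
  equivq f g -> equivq (map (relabel la lb) f) (map (relabel la lb) g).
Proof.
case=> fs [basic_fs coef_fs]; exists (map (map (relabel la lb)) fs); split.
  by move=> _ /mapP[h h_in ->]; apply/basic_map_relabel/basic_fs.
move=> x; rewrite !coef_map_relabel -mulrBr coef_fs big_map mulr_sumr.
by apply: eq_bigr => h _; rewrite coef_map_relabel.
Qed.

Lemma relabel_sign_setU1 H u w : ~~ connect (und H) u w ->
  (-1) ^+ sigma (cidx lb H u) (cidx lb H w) * relabel_sign la lb H =
  relabel_sign la lb ((u, w) |: H) * (-1) ^+ sigma (cidx la H u) (cidx la H w).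
Proof.
move=> uw_disconnected; have ref_total := ref_order_total V.
rewrite /relabel_sign -!exprD -[in LHS]signr_odd -[in RHS]signr_odd !oddD.
have := odd_inversions_setU1 la_total ref_total uw_disconnected.
have := odd_inversions_setU1 lb_total ref_total uw_disconnected.
rewrite !oddD.
move: (odd (inversions la _ H)) (odd (inversions lb _ H)).
move: (odd (inversions la _ ((u, w) |: H))) (odd (inversions lb _ ((u, w) |: H))).
move: (odd (sigma (cidx la H u) _)) (odd (sigma (cidx lb H u) _)).
by move: (odd (sigma (cidx (@ref_order V) H u) _)); do 7 case.
Qed.

Lemma dgen_relabel E (p : R * Gen A V) : multipath E p.2.1 -> size p.2.2 = ncomp p.2.1 ->
  dgen lb E (relabel la lb p) = map (relabel la lb) (dgen la E p).
Proof.
case: p => r [H a] /= path_H size_a.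
rewrite /dgen /relabel /reorder_gen /= -map_comp; apply/eq_in_map => -[u w].
rewrite mem_filter mem_enum !inE => /andP[/asboolP path_H' /andP[uw_notin _]] /=.
have uw_disconnected := multipath_setU1_disconnected path_H path_H' uw_notin.
by rewrite reorder_merge // mulrA relabel_sign_setU1 // mulrA.
Qed.

Lemma dFS_map_relabel E n f : cdeg E n f ->
  dFS lb E (map (relabel la lb) f) = map (relabel la lb) (dFS la E f).
Proof.
move=> cdeg_f; rewrite /dFS map_flatten -!map_comp; congr flatten.
apply/eq_in_map => p /cdeg_f[path_p _ size_p] /=.
exact: dgen_relabel.
Qed.

End Relabel.

Unset Implicit Arguments. Set Strict Implicit. Set Printing Implicit Defensive.

Theorem proposition4p11 (R : comPzRingType) (A : algType R) (V : finType)
    (E : {set V * V}) (loopless : forall v : V, (v, v) \notin E)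
    (le1 le2 : rel V) (tot1 : total_order le1) (tot2 : total_order le2) :
  exists psi : nat -> FS A V -> FS A V, complex_iso E le1 le2 psi.
Proof.
exists (fun _ => map (relabel le1 le2)) => n.
split; first exact: cdeg_map_relabel.
split; first by move=> f g _ _; apply: equivq_map_relabel.
split; first by move=> f g _ _; rewrite map_cat; apply: equivq_refl.
split; first by move=> c f _; rewrite map_relabel_scale; apply: equivq_refl.
split.
  move=> f g _ _ /(equivq_map_relabel tot2 tot1).
  by rewrite !(mapK (relabelK tot1 tot2)).
split.
  move=> g cdeg_g; exists (map (relabel le2 le1) g); first exact: cdeg_map_relabel.
  by rewrite (mapK (relabelK tot2 tot1)); apply: equivq_refl.
by move=> f cdeg_f; rewrite (dFS_map_relabel tot1 tot2 cdeg_f); apply: equivq_refl.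
Qed.
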